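(* Let $f(x)=\sum_{i=1}^Bp_i\|x_{(i)}\|$ with $p_i>0$, where $x=(x_{(1)},\dots,x_{(B)})$, $x_{(i)}\in\mathbb{R}^{n_i}$, $\sum_in_i=n$, and let $g:\mathbb{R}^n\to\mathbb{R}$ be differentiable and strongly convex. Consider $\min_{x}f(x)$ s.t. $g(x)\le0$. Assume there is $\tilde x$ with $g(\tilde x)<0$, and that every minimizer $x_0^*$ of $f$ over $\mathbb{R}^n$ satisfies $g(x_0^* )>0$. Then the KKT point of this problem is unique, i.e. there is exactly one pair $(x^*,y^* )\in\mathbb{R}^n\times\mathbb{R}_+$ with $0\in\partial f(x^* )+y^*\nabla g(x^* )$ and $y^*g(x^* )=0$.
   Context: $\|\cdot\|$ is the Euclidean norm; $\partial f$ is the convex subdifferential. *)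

From HB Require Import structures.
From mathcomp Require Import all_boot all_order all_algebra.
From mathcomp Require Import all_classical all_reals all_analysis.
Set Implicit Arguments. Unset Strict Implicit. Unset Printing Implicit Defensive.
Import Order.TTheory GRing.Theory Num.Theory.
Import numFieldNormedType.Exports.
Local Open Scope ring_scope.

Definition dotv (R : realType) (n : nat) (u v : 'rV[R]_n) : R :=
  \sum_(j < n) u 0 j * v 0 j.

Definition enorm (R : realType) (n : nat) (u : 'rV[R]_n) : R :=
  Num.sqrt (dotv u u).

(* Block structure: blk j = i means coordinate j belongs to block x_(i).
   The block x_(i) has n_i = #{j | blk j = i} coordinates, and sum n_i = n.
   Euclidean norm of the block x_(i): *)
Definition block_norm (R : realType) (n B : nat) (blk : 'I_n -> 'I_B)
    (x : 'rV[R]_n) (i : 'I_B) : R :=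
  Num.sqrt (\sum_(j < n | blk j == i) x 0 j ^+ 2).

Definition group_norm (R : realType) (n B : nat) (blk : 'I_n -> 'I_B)
    (p : 'I_B -> R) (x : 'rV[R]_n) : R :=
  \sum_(i < B) p i * block_norm blk x i.

Definition subgrad (R : realType) (n : nat) (f : 'rV[R]_n -> R)
    (x v : 'rV[R]_n) : Prop :=
  forall z : 'rV[R]_n, f x + dotv v (z - x) <= f z.

Definition grad (R : realType) (n : nat) (g : 'rV[R]_n -> R)
    (x : 'rV[R]_n) : 'rV[R]_n :=
  \row_(j < n) ('d g x (delta_mx 0 j : 'rV[R]_n)).

Definition strongly_convex (R : realType) (n : nat) (g : 'rV[R]_n -> R) : Prop :=
  exists2 mu : R, 0 < mu &
    forall (x y : 'rV[R]_n) (t : R), 0 <= t -> t <= 1 ->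
      g (t *: x + (1 - t) *: y)
        <= t * g x + (1 - t) * g y - mu / 2 * t * (1 - t) * enorm (x - y) ^+ 2.

Definition KKT (R : realType) (n : nat) (f g : 'rV[R]_n -> R)
    (x : 'rV[R]_n) (y : R) : Prop :=
  [/\ 0 <= y, g x <= 0, y * g x = 0 &
      exists2 v : 'rV[R]_n, subgrad f x v & v + y *: grad g x = 0].

From HB Require Import structures.
From mathcomp Require Import all_boot all_order all_algebra.
From mathcomp Require Import all_classical all_reals all_analysis.
From mathcomp Require Import ring lra.
Import Order.TTheory GRing.Theory Num.Theory.
Import numFieldNormedType.Exports.

(** Existence: strong convexity makes the feasible set [g <= 0] compact, so
    [f] attains its minimum there at some [xs].  With a Slater point, the
    multiplier [y = inf {(f x - f xs) / (- g x) | g x < 0}] makes [xs] a global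
    minimizer of the Lagrangian [f + y g], and comparing [f] with [g] along
    segments from [xs] shows [- y grad g xs] is a subgradient of [f] at [xs].

    Uniqueness: at a KKT point [y > 0], since otherwise [x] minimizes [f] and
    is infeasible; hence [g x = 0].  The subgradient inequality at [x1] and the
    strong-convexity gradient inequality give
    [f x1 + y1 mu/2 |x2 - x1|^2 <= f x2], and symmetrically, so [x1 = x2].
    Finally positive homogeneity of [f] turns the subgradient inequality into
    Euler's identity [f x = - y <grad g x, x>], with [f x > 0], which pins
    down [y]. *)

Set Implicit Arguments.
Unset Strict Implicit.
Unset Printing Implicit Defensive.
Local Open Scope classical_set_scope.
Local Open Scope ring_scope.

Definition convex_fun (R : realType) (n : nat) (h : 'rV[R]_n -> R) : Prop :=
  forall (x y : 'rV[R]_n) (t : R), 0 <= t -> t <= 1 ->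
    h (t *: x + (1 - t) *: y) <= t * h x + (1 - t) * h y.

Section InnerProduct.
Variables (R : realType) (n : nat).
Implicit Types (u v w : 'rV[R]_n).

Lemma dotvC u v : dotv u v = dotv v u.
Proof. by apply: eq_bigr => j _; rewrite mulrC. Qed.

Lemma dotvDl u w v : dotv (u + w) v = dotv u v + dotv w v.
Proof. by rewrite /dotv -big_split; apply: eq_bigr => j _; rewrite mxE mulrDl. Qed.

Lemma dotvZl a u v : dotv (a *: u) v = a * dotv u v.
Proof. by rewrite /dotv mulr_sumr; apply: eq_bigr => j _; rewrite mxE mulrA. Qed.

Lemma dotvNl u v : dotv (- u) v = - dotv u v.
Proof. by rewrite -scaleN1r dotvZl mulN1r. Qed.

Lemma dotvBl u w v : dotv (u - w) v = dotv u v - dotv w v.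
Proof. by rewrite dotvDl dotvNl. Qed.

Lemma dotvDr v u w : dotv v (u + w) = dotv v u + dotv v w.
Proof. by rewrite dotvC dotvDl !(dotvC v). Qed.

Lemma dotvZr a v u : dotv v (a *: u) = a * dotv v u.
Proof. by rewrite dotvC dotvZl dotvC. Qed.

Lemma dotvBr v u w : dotv v (u - w) = dotv v u - dotv v w.
Proof. by rewrite dotvC dotvBl !(dotvC v). Qed.

Lemma dotvNr v u : dotv v (- u) = - dotv v u.
Proof. by rewrite dotvC dotvNl dotvC. Qed.

Lemma dotv0l v : dotv 0 v = 0.
Proof. by rewrite -(scale0r 0) dotvZl mul0r. Qed.

Lemma dotv0r v : dotv v 0 = 0.
Proof. by rewrite dotvC dotv0l. Qed.

Lemma sqr_coord_le_dotvv u j : u 0 j ^+ 2 <= dotv u u.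
Proof.
rewrite /dotv (bigD1 j) //= -expr2 lerDl.
by apply: sumr_ge0 => k _; rewrite -expr2 sqr_ge0.
Qed.

Lemma dotvv_ge0 u : 0 <= dotv u u.
Proof. by apply: sumr_ge0 => j _; rewrite -expr2 sqr_ge0. Qed.

Lemma dotvv_eq0 u : dotv u u = 0 -> u = 0.
Proof.
move=> u0; apply/rowP => j; rewrite mxE; apply/eqP; rewrite -sqrf_eq0.
by rewrite eq_le sqr_ge0 andbT -u0 sqr_coord_le_dotvv.
Qed.

Lemma enorm_ge0 u : 0 <= enorm u.
Proof. exact: sqrtr_ge0. Qed.

Lemma enorm_sqr u : enorm u ^+ 2 = dotv u u.
Proof. by rewrite sqr_sqrtr // dotvv_ge0. Qed.

Lemma enorm_eq0 u : enorm u = 0 -> u = 0.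
Proof. by move=> u0; apply: dotvv_eq0; rewrite -enorm_sqr u0 expr0n. Qed.

Lemma enormZ a u : enorm (a *: u) = `|a| * enorm u.
Proof. by rewrite /enorm dotvZl dotvZr mulrA -expr2 sqrtrM ?sqr_ge0 // sqrtr_sqr. Qed.

Lemma enormN u : enorm (- u) = enorm u.
Proof. by rewrite -scaleN1r enormZ normrN1 mul1r. Qed.

Lemma coord_le_enorm u j : `|u 0 j| <= enorm u.
Proof. by rewrite -sqrtr_sqr ler_sqrt ?dotvv_ge0 // sqr_coord_le_dotvv. Qed.

Lemma cauchy_schwarz_sqr u v : dotv u v ^+ 2 <= dotv u u * dotv v v.
Proof.
have [v0|] := eqVneq v 0; first by rewrite v0 !dotv0r expr0n mulr0.
move=> /eqP nz_v; have vv_gt0 : 0 < dotv v v.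
  by rewrite lt_neqAle dotvv_ge0 andbT eq_sym; apply/eqP => /dotvv_eq0.
have := dotvv_ge0 (dotv v v *: u - dotv u v *: v).
rewrite !dotvBl !dotvBr !dotvZl !dotvZr (dotvC v u) => h.
rewrite -subr_ge0 -(pmulr_rge0 _ vv_gt0); move: h; congr (_ <= _); ring.
Qed.

Lemma cauchy_schwarz u v : dotv u v <= enorm u * enorm v.
Proof.
rewrite -sqrtrM ?dotvv_ge0 //; apply: le_trans (ler_norm _) _.
by rewrite -sqrtr_sqr ler_sqrt ?cauchy_schwarz_sqr // mulr_ge0 // dotvv_ge0.
Qed.

Lemma ler_enormD u v : enorm (u + v) <= enorm u + enorm v.
Proof.
rewrite -(ler_pXn2r (isT : (0 < 2)%N)) ?nnegrE ?addr_ge0 ?enorm_ge0 //.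
rewrite enorm_sqr !dotvDl !dotvDr sqrrD !enorm_sqr (dotvC v u).
have := cauchy_schwarz u v; lra.
Qed.

Lemma mx_norm_le_enorm u : `|u| <= enorm u.
Proof.
rewrite [leLHS]/Num.Def.normr /= mx_normrE.
apply: bigmax_le => [|[i j] _]; first exact: enorm_ge0.
by rewrite /= (ord1 i); exact: coord_le_enorm.
Qed.

Lemma coord_le_mx_norm u j : `|u 0 j| <= `|u|.
Proof. by rewrite [leRHS]/Num.Def.normr /= mx_normrE; exact: (le_bigmax _ _ (0, j)). Qed.

Lemma enorm_le_mx_norm u : enorm u <= Num.sqrt n%:R * `|u|.
Proof.
rewrite -[X in _ * X]ger0_norm // -sqrtr_sqr -sqrtrM // ler_sqrt; last first.
  by rewrite mulr_ge0 // sqr_ge0.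
have -> : n%:R * `|u| ^+ 2 = \sum_(j < n) `|u| ^+ 2.
  by rewrite sumr_const card_ord mulr_natl.
rewrite /dotv; apply: ler_sum => j _.
by rewrite -expr2 -[u 0 j ^+ 2]real_normK ?num_real // lerXn2r ?nnegrE ?coord_le_mx_norm.
Qed.

End InnerProduct.

Section GroupNorm.
Variables (R : realType) (n B : nat) (blk : 'I_n -> 'I_B) (p : 'I_B -> R).
Hypothesis p_gt0 : forall i, 0 < p i.
Implicit Types (u v : 'rV[R]_n).
Local Notation f := (group_norm blk p).

Definition block_part i u : 'rV[R]_n := \row_j (if blk j == i then u 0 j else 0).

Lemma block_normE i u : block_norm blk u i = enorm (block_part i u).
Proof.
rewrite /block_norm /enorm /dotv big_mkcond /=; congr Num.sqrt.
by apply: eq_bigr => j _; rewrite mxE; case: ifP; rewrite ?mulr0 // expr2.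
Qed.

Lemma block_partD i u v : block_part i (u + v) = block_part i u + block_part i v.
Proof. by apply/rowP => j; rewrite !mxE; case: ifP; rewrite ?addr0 // mxE. Qed.

Lemma block_partZ i a u : block_part i (a *: u) = a *: block_part i u.
Proof. by apply/rowP => j; rewrite !mxE; case: ifP; rewrite ?mulr0 // mxE. Qed.

Lemma block_norm_le_enorm i u : block_norm blk u i <= enorm u.
Proof.
rewrite block_normE ler_sqrt ?dotvv_ge0 // /dotv; apply: ler_sum => j _.
by rewrite mxE; case: ifP => _; rewrite ?mul0r -?expr2 ?sqr_ge0.
Qed.

Lemma group_norm_ge0 u : 0 <= f u.
Proof.
by apply: sumr_ge0 => i _; apply: mulr_ge0; [exact: ltW | exact: sqrtr_ge0].
Qed.

Lemma ler_group_normD u v : f (u + v) <= f u + f v.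
Proof.
rewrite /group_norm -big_split /=; apply: ler_sum => i _.
rewrite -mulrDr ler_wpM2l ?(ltW (p_gt0 i)) // !block_normE block_partD.
exact: ler_enormD.
Qed.

Lemma group_normZ a u : f (a *: u) = `|a| * f u.
Proof.
rewrite /group_norm mulr_sumr; apply: eq_bigr => i _.
by rewrite !block_normE block_partZ enormZ mulrCA.
Qed.

Lemma group_normN u : f (- u) = f u.
Proof. by rewrite -scaleN1r group_normZ normrN1 mul1r. Qed.

Lemma group_norm_convex : convex_fun f.
Proof.
move=> u v t t0 t1; apply: le_trans (ler_group_normD _ _) _.
by rewrite !group_normZ !ger0_norm // subr_ge0.
Qed.

Lemma group_norm_le_enorm u : f u <= (\sum_i p i) * enorm u.
Proof.
rewrite /group_norm mulr_suml; apply: ler_sum => i _.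
by rewrite ler_wpM2l ?(ltW (p_gt0 i)) ?block_norm_le_enorm.
Qed.

Lemma group_norm_lipschitz u v : `|f u - f v| <= (\sum_i p i) * enorm (u - v).
Proof.
have fuv := ler_group_normD v (u - v); have fvu := ler_group_normD u (v - u).
rewrite addrC subrK in fuv; rewrite addrC subrK -opprB group_normN in fvu.
have := group_norm_le_enorm (u - v).
rewrite ler_norml; lra.
Qed.

Lemma continuous_group_norm : continuous f.
Proof.
move=> u; apply/(@cvgrPdist_lt _ _ _ (nbhs u)) => e e_gt0.
set K := (\sum_i p i) * Num.sqrt n%:R.
have K_ge0 : 0 <= K by rewrite mulr_ge0 ?sqrtr_ge0 ?sumr_ge0 // => i _; rewrite ltW.
have d_gt0 : 0 < e / (K + 1) by rewrite divr_gt0 // ltr_wpDl.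
near=> v.
have uv : `|u - v| < e / (K + 1).
  by near: v; apply: (@cvgr_dist_lt _ _ _ (nbhs u) _ id u) => //; exact: cvg_id.
apply: le_lt_trans (group_norm_lipschitz u v) _.
apply: le_lt_trans (_ : K * `|u - v| < e).
  by rewrite -mulrA ler_wpM2l ?enorm_le_mx_norm ?sumr_ge0 // => i _; rewrite ltW.
move: uv; rewrite ltr_pdivlMr ?ltr_wpDl //; have := normr_ge0 (u - v); nra.
Unshelve. all: by end_near.
Qed.

End GroupNorm.

Section Gradient.
Variables (R : realType) (n : nat) (g : 'rV[R]_n -> R) (x d : 'rV[R]_n).
Hypothesis g_diff : differentiable g x.

Lemma diff_dotv_grad : 'd g x d = dotv (grad g x) d.
Proof.
rewrite {1}(matrix_sum_delta d) linear_sum big_ord1 linear_sum /dotv.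
by apply: eq_bigr => j _; rewrite linearZ /= mxE mulrC.
Qed.

Lemma grad_quotient_cvg :
  (fun s : R => s^-1 * (g (x + s *: d) - g x)) @ 0^'+ --> dotv (grad g x) d.
Proof.
have dg : (fun s : R => s^-1 *: ((g \o shift x) (s *: d) - g x)) @ 0^' --> 'D_d g x.
  exact: diff_derivable.
rewrite -diff_dotv_grad -deriveE //.
have -> : (fun s : R => s^-1 * (g (x + s *: d) - g x)) =
          (fun s : R => s^-1 *: ((g \o shift x) (s *: d) - g x)).
  by apply/funext => s /=; rewrite [x + _]addrC.
exact: cvg_dnbhs_at_right.
Qed.

Lemma dotv_grad_le (c K : R) :
    (forall s, 0 < s -> s < 1 -> g (x + s *: d) - g x <= s * c + s ^+ 2 * K) ->
  dotv (grad g x) d <= c.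
Proof.
move=> bound.
have affine : (fun s : R => c + s * K) @ 0^'+ --> c.
  apply: cvg_at_right_filter; rewrite -[X in _ --> X]addr0 -[X in _ + X](mul0r K).
  by apply: cvgD; [exact: cvg_cst | apply: cvgMl; exact: cvg_id].
apply: (ler_cvg_to grad_quotient_cvg affine); near=> s.
have s_gt0 : 0 < s by near: s; exact: nbhs_right_gt.
have s_lt1 : s < 1 by near: s; exact: nbhs_right_lt.
rewrite -(ler_pM2l s_gt0) mulrA mulfV ?gt_eqF // mul1r mulrDr mulrA -expr2.
exact: bound.
Unshelve. all: by end_near.
Qed.

Lemma dotv_grad_ge (c : R) :
    (forall s, 0 < s -> s < 1 -> s * c <= g (x + s *: d) - g x) ->
  c <= dotv (grad g x) d.
Proof.
move=> bound; apply: (ler_cvg_to (cvg_cst c) grad_quotient_cvg); near=> s.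
have s_gt0 : 0 < s by near: s; exact: nbhs_right_gt.
have s_lt1 : s < 1 by near: s; exact: nbhs_right_lt.
by rewrite -(ler_pM2l s_gt0) mulrA mulfV ?gt_eqF // mul1r; exact: bound.
Unshelve. all: by end_near.
Qed.

End Gradient.

Lemma scale_comb_shift (R : pzRingType) (V : lmodType R) (x z : V) (s : R) :
  s *: z + (1 - s) *: x = x + s *: (z - x).
Proof. by rewrite scalerBl scale1r scalerBr addrCA addrA. Qed.

Section StrongConvexity.
Variables (R : realType) (n : nat) (g : 'rV[R]_n -> R) (mu : R).
Hypothesis g_diff : forall x, differentiable g x.
Hypothesis mu_gt0 : 0 < mu.
Hypothesis g_strong : forall (x y : 'rV[R]_n) (t : R), 0 <= t -> t <= 1 ->
  g (t *: x + (1 - t) *: y)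
    <= t * g x + (1 - t) * g y - mu / 2 * t * (1 - t) * enorm (x - y) ^+ 2.

Lemma strongly_convex_convex : convex_fun g.
Proof.
move=> x y t t0 t1; apply: le_trans (g_strong x y t0 t1) _.
rewrite lerBlDr lerDl; apply: mulr_ge0; last exact: sqr_ge0.
by rewrite mulr_ge0 ?subr_ge0 // mulr_ge0 // divr_ge0 ?ltW.
Qed.

Lemma strongly_convex_grad_ineq x z :
  g x + dotv (grad g x) (z - x) + mu / 2 * enorm (z - x) ^+ 2 <= g z.
Proof.
set D := enorm (z - x) ^+ 2.
suff : dotv (grad g x) (z - x) <= g z - g x - mu / 2 * D by lra.
apply: (dotv_grad_le (K := mu / 2 * D) (g_diff x)) => s s0 s1.
have := g_strong z x (ltW s0) (ltW s1); rewrite scale_comb_shift -/D.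
suff -> : s * (g z - g x - mu / 2 * D) + s ^+ 2 * (mu / 2 * D) =
          s * g z + (1 - s) * g x - mu / 2 * s * (1 - s) * D - g x by lra.
ring.
Qed.

Lemma strongly_convex_sublevel_bounded (c : R) : bounded_set [set x | g x <= c].
Proof.
set a := `|c - g 0|; set G := enorm (grad g 0).
have a_ge0 : 0 <= a := normr_ge0 _.
have G_ge0 : 0 <= G := enorm_ge0 _.
set M := 1 + 2 * (a + G) / mu.
have M_ge1 : 1 <= M.
  by rewrite lerDl divr_ge0 ?(ltW mu_gt0) // mulr_ge0 // addr_ge0.
suff enorm_le : forall x, g x <= c -> enorm x <= M.
  exists M; split; first exact: num_real.
  move=> N MN x /= gx; apply: le_trans (mx_norm_le_enorm x) _.
  exact: le_trans (enorm_le x gx) (ltW MN).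
move=> x gx; set D := enorm x.
have D_ge0 : 0 <= D := enorm_ge0 _.
have quad : mu / 2 * D ^+ 2 <= a + G * D.
  have := strongly_convex_grad_ineq 0 x; rewrite subr0 -/D.
  have := cauchy_schwarz (- grad g 0) x; rewrite dotvNl enormN -/G -/D.
  have := ler_norm (c - g 0); rewrite -/a; lra.
have [D_le1|D_gt1] := lerP D 1; first lra.
suff : D <= 2 * (a + G) / mu by rewrite /M; lra.
rewrite ler_pdivlMr //; nra.
Qed.

End StrongConvexity.

Section LagrangeMultiplier.
Variables (R : realType) (n : nat) (f g : 'rV[R]_n -> R).
Hypothesis f_convex : convex_fun f.
Hypothesis g_convex : convex_fun g.

Lemma lagrangian_min_subgrad x y :
    (forall x, differentiable g x) -> 0 <= y ->
    (forall z, f x + y * g x <= f z + y * g z) ->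
  subgrad f x (- (y *: grad g x)).
Proof.
move=> g_diff y_ge0 x_min z; rewrite dotvNl dotvZl.
suff : f x - f z <= y * dotv (grad g x) (z - x) by lra.
have step s : 0 < s -> s < 1 ->
    s * (f x - f z) <= y * (g (x + s *: (z - x)) - g x).
  move=> s_gt0 s_lt1; have := x_min (x + s *: (z - x)).
  have := f_convex z x (ltW s_gt0) (ltW s_lt1); rewrite scale_comb_shift; lra.
have [y_gt0|y_le0] := ltrP 0 y; last first.
  have y0 : y = 0 by apply/le_anti/andP.
  by have := step (1 / 2) ltac:(lra) ltac:(lra); rewrite y0 !mul0r; lra.
rewrite -ler_pdivrMl //; apply: (dotv_grad_ge (g_diff x)) => s s_gt0 s_lt1.
by rewrite mulrCA ler_pdivrMl //; exact: step.
Qed.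

Section ConstrainedMinimum.
Variable xs : 'rV[R]_n.
Hypothesis xs_min : forall z, g z <= 0 -> f xs <= f z.

(* The point of [x1, x2] where g vanishes is feasible, so f xs bounds the
   convex interpolation of f x1 and f x2 there. *)
Lemma lagrange_ratio_le x1 x2 : 0 < g x1 -> g x2 < 0 ->
  (f xs - f x1) / g x1 <= (f x2 - f xs) / (- g x2).
Proof.
move=> g1 g2; set l := - g x2 / (g x1 - g x2).
have l_ge0 : 0 <= l by rewrite divr_ge0; lra.
have l_le1 : l <= 1 by rewrite ler_pdivrMr; lra.
have gl : l * g x1 + (1 - l) * g x2 = 0 by rewrite /l; field; lra.
have fl : f xs <= f (l *: x1 + (1 - l) *: x2).
  by apply: xs_min; rewrite -[X in _ <= X]gl; exact: g_convex.
have := f_convex x1 x2 l_ge0 l_le1.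
have -> : l * f x1 + (1 - l) * f x2 = (- g x2 * f x1 + g x1 * f x2) / (g x1 - g x2).
  by rewrite /l; field; lra.
rewrite ler_pdivlMr; last lra.
move=> fx12; rewrite ler_pdivrMr // mulrAC ler_pdivlMr; last lra.
nra.
Qed.

Lemma exists_lagrange_multiplier : (exists xt, g xt < 0) ->
  exists2 y, 0 <= y & forall z, f xs <= f z + y * g z.
Proof.
move=> [xt gxt].
pose S := [set (f x - f xs) / (- g x) | x in [set x | g x < 0]].
have S_lb : lbound S 0.
  move=> _ [x /= gx <-]; apply: divr_ge0; last by rewrite oppr_ge0 ltW.
  by rewrite subr_ge0 xs_min // ltW.
have S_inf x : g x < 0 -> inf S <= (f x - f xs) / (- g x).
  by move=> gx; apply: ge_inf; [exists 0 | exists x].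
exists (inf S); first by apply: lb_le_inf => //; exists ((f xt - f xs) / (- g xt)), xt.
move=> z; have [gz|gz|gz] := ltrgtP (g z) 0.
- by have := S_inf z gz; rewrite ler_pdivlMr ?oppr_gt0 //; lra.
- have : (f xs - f z) / g z <= inf S.
    apply: lb_le_inf; first by exists ((f xt - f xs) / (- g xt)), xt.
    by move=> _ [x /= gx <-]; exact: lagrange_ratio_le.
  by rewrite ler_pdivrMr //; lra.
- by rewrite gz mulr0 addr0 xs_min // gz.
Qed.

End ConstrainedMinimum.
End LagrangeMultiplier.

Section KKTPoints.
Variables (R : realType) (n : nat) (f g : 'rV[R]_n -> R) (mu : R).
Hypothesis f_convex : convex_fun f.
Hypothesis f_ge0 : forall x, 0 <= f x.
Hypothesis f_homo : forall (a : R) x, 0 <= a -> f (a *: x) = a * f x.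
Hypothesis g_diff : forall x, differentiable g x.
Hypothesis mu_gt0 : 0 < mu.
Hypothesis g_strong : forall (x y : 'rV[R]_n) (t : R), 0 <= t -> t <= 1 ->
  g (t *: x + (1 - t) *: y)
    <= t * g x + (1 - t) * g y - mu / 2 * t * (1 - t) * enorm (x - y) ^+ 2.
Hypothesis unconstrained_min_infeasible :
  forall x0, (forall z, f x0 <= f z) -> 0 < g x0.

Lemma exists_KKT : continuous f -> (exists xt, g xt < 0) -> exists x y, KKT f g x y.
Proof.
move=> f_cont slater; have g_convex := strongly_convex_convex mu_gt0 g_strong.
pose A := [set x | g x <= 0].
have A_compact : compact A.
  apply: bounded_closed_compact; first exact: (strongly_convex_sublevel_bounded g_diff mu_gt0 g_strong).
  have g_cont : continuous g by move=> x; exact: differentiable_continuous.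
  exact: (continuous_closedP g).1 g_cont _ (@closed_le R 0).
have A_nonempty : A !=set0 by case: slater => xt gxt; exists xt; rewrite /A /= ltW.
have [xs /set_mem xsA xs_min] :=
  compact_EVT_min A_nonempty A_compact (continuous_subspaceT f_cont).
have xs_minA z : g z <= 0 -> f xs <= f z by move=> gz; apply: xs_min; exact: mem_set.
have [y y_ge0 lagr] := exists_lagrange_multiplier f_convex g_convex xs_minA slater.
have slack : y * g xs = 0.
  have := lagr xs; have : y * g xs <= 0 by exact: mulr_ge0_le0.
  lra.
exists xs, y; split => //; exists (- (y *: grad g xs)); last by rewrite addNr.
by apply: lagrangian_min_subgrad => // z; rewrite slack addr0.
Qed.

Lemma KKT_subgrad x y : KKT f g x y -> subgrad f x (- (y *: grad g x)).
Proof. by move=> [_ _ _ [v v_sub /eqP]]; rewrite addr_eq0 => /eqP <-. Qed.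

Lemma KKT_active x y : KKT f g x y -> 0 < y /\ g x = 0.
Proof.
move=> [y_ge0 gx_le0 slack [v v_sub v_eq]].
have [y_gt0|y_le0] := ltrP 0 y; last first.
  have y0 : y = 0 by apply/le_anti/andP.
  have v0 : v = 0 by rewrite -v_eq y0 scale0r addr0.
  have : 0 < g x.
    by apply: unconstrained_min_infeasible => z; have := v_sub z; rewrite v0 dotv0l addr0.
  lra.
by split => //; move/eqP: slack; rewrite mulf_eq0 gt_eqF // => /eqP.
Qed.

Lemma subgrad_homogeneous x v : subgrad f x v -> f x = dotv v x.
Proof.
move=> v_sub; have := v_sub 0; have := v_sub (2 *: x).
rewrite -(scale0r x) !f_homo ?ler0n // scale0r sub0r dotvNr.
have -> : 2 *: x - x = x by rewrite scalerDl scale1r addrK.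
lra.
Qed.

Lemma KKT_value_gap x1 y1 x2 y2 : KKT f g x1 y1 -> KKT f g x2 y2 ->
  f x1 + y1 * (mu / 2 * enorm (x2 - x1) ^+ 2) <= f x2.
Proof.
move=> k1 k2; have [y1_gt0 g1] := KKT_active k1; have [_ g2] := KKT_active k2.
have := KKT_subgrad k1 x2; rewrite dotvNl dotvZl.
have := strongly_convex_grad_ineq g_diff g_strong x1 x2; rewrite g1 g2.
nra.
Qed.

Lemma KKT_point_unique x1 y1 x2 y2 : KKT f g x1 y1 -> KKT f g x2 y2 -> x1 = x2.
Proof.
move=> k1 k2; have [y1_gt0 _] := KKT_active k1; have [y2_gt0 _] := KKT_active k2.
have gap12 := KKT_value_gap k1 k2.
have := KKT_value_gap k2 k1; rewrite -enormN opprB => gap21.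
set D := enorm (x2 - x1) ^+ 2 in gap12 gap21.
have c_gt0 : 0 < (y1 + y2) * (mu / 2) by rewrite mulr_gt0 ?divr_gt0 ?addr_gt0.
have : (y1 + y2) * (mu / 2) * D <= 0 by lra.
rewrite pmulr_rle0 // => D_le0.
have : D == 0 by rewrite eq_le D_le0 sqr_ge0.
by rewrite /D sqrf_eq0 => /eqP/enorm_eq0/eqP; rewrite subr_eq0 => /eqP.
Qed.

Lemma KKT_multiplier_unique x y1 y2 : KKT f g x y1 -> KKT f g x y2 -> y1 = y2.
Proof.
move=> k1 k2; have [_ gx] := KKT_active k1.
have := subgrad_homogeneous (KKT_subgrad k1).
have := subgrad_homogeneous (KKT_subgrad k2).
rewrite !dotvNl !dotvZl; set G := dotv (grad g x) x => e2 e1.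
have fx_gt0 : 0 < f x.
  rewrite lt_def f_ge0 andbT; apply/eqP => fx0.
  have : 0 < g x by apply: unconstrained_min_infeasible => z; rewrite fx0.
  lra.
have /eqP : (y1 - y2) * G = 0 by rewrite mulrBl; lra.
by rewrite mulf_eq0 subr_eq0 => /orP[/eqP //| /eqP G0]; move: e1; rewrite G0; lra.
Qed.

End KKTPoints.

Theorem proposition5 (R : realType) (n B : nat) (blk : 'I_n -> 'I_B)
    (p : 'I_B -> R) (g : 'rV[R]_n -> R) :
  (forall i, 0 < p i) ->
  (forall x, differentiable g x) ->
  strongly_convex g ->
  (exists xt : 'rV[R]_n, g xt < 0) ->
  (forall x0 : 'rV[R]_n,
      (forall z, group_norm blk p x0 <= group_norm blk p z) -> 0 < g x0) ->
  exists x : 'rV[R]_n, exists y : R,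
    KKT (group_norm blk p) g x y /\
    forall (x' : 'rV[R]_n) (y' : R),
      KKT (group_norm blk p) g x' y' -> x' = x /\ y' = y.
Proof.
move=> p_gt0 g_diff [mu mu_gt0 g_strong] slater f_min_infeasible.
have f_convex : convex_fun (group_norm blk p) by exact: group_norm_convex.
have f_cont : continuous (group_norm blk p) by exact: continuous_group_norm.
have f_ge0 : forall x, 0 <= group_norm blk p x by exact: group_norm_ge0.
have f_homo (a : R) x : 0 <= a -> group_norm blk p (a *: x) = a * group_norm blk p x.
  by move=> a_ge0; rewrite group_normZ ger0_norm.
have [x [y kxy]] := exists_KKT f_convex g_diff mu_gt0 g_strong f_cont slater.
exists x, y; split => // x' y' kxy'.
have x'x := KKT_point_unique g_diff mu_gt0 g_strong f_min_infeasible kxy' kxy.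
split => //; subst x'.
exact: (KKT_multiplier_unique f_ge0 f_homo f_min_infeasible kxy' kxy).
Qed.
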